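(* For every $c\ge0$, every distribution $\mathcal{D}$ over $\mathbb{R}^k_{\ge0}$ and every mechanism $M$, there exists a $c$-expensive mechanism $M'$ with $\mathrm{Rev}(\mathcal{D},M')\ge\mathrm{Rev}(\mathcal{D},M)-c$.
   Context: Setting: one seller, one additive buyer, $k$ items; the buyer's value vector $\vec v\in\mathbb{R}^k_{\ge0}$ is drawn from a distribution $\mathcal{D}$. A mechanism $M$ is a set of options $(\vec q,p)$ with $\vec q\in[0,1]^k$, $p\in\mathbb{R}$, always containing the null option $(\vec 0,0)$; a buyer with values $\vec v$ selects an option maximizing $\vec v\cdot\vec q-p$ (ties broken arbitrarily; a maximizer is assumed to exist), and $\vec q^M(\vec v),p^M(\vec v)$ denote the allocation and price of the selected option. $\mathrm{Rev}(\mathcal{D},M)=\mathbb{E}_{\vec v\sim\mathcal{D}}[p^M(\vec v)]$. A mechanism is $c$-expensive if every option other than the null option $(\vec 0,0)$ has price at least $c$. *)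

From HB Require Import structures.
From mathcomp Require Import all_boot all_order all_algebra.
From mathcomp Require Import all_classical all_reals all_analysis.
Set Implicit Arguments. Unset Strict Implicit. Unset Printing Implicit Defensive.
Import Order.TTheory GRing.Theory Num.Theory.
Local Open Scope ring_scope.
Local Open Scope classical_set_scope.

(* Value vectors and allocations live in R^k, represented as k.-tuple R
   (which carries the product = Borel sigma-algebra in MathComp-Analysis).
   An option is a pair (q, p) : allocation * price. *)
Section Defs.
Variables (R : realType) (k : nat).

Definition opt := (k.-tuple R * R)%type.

Definition null_opt : opt := ([tuple (0 : R) | _ < k], 0).

Definition utility (v : k.-tuple R) (o : opt) : R :=
  \sum_(i < k) tnth v i * tnth o.1 i - o.2.

Definition nonneg_vec (v : k.-tuple R) : Prop := forall i : 'I_k, 0 <= tnth v i.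

Definition is_mechanism (M : set opt) : Prop :=
  M null_opt /\ forall o, M o -> forall i : 'I_k, 0 <= tnth o.1 i <= 1.

Definition is_choice (M : set opt) (sel : k.-tuple R -> opt) : Prop :=
  forall v, nonneg_vec v ->
    M (sel v) /\ forall o, M o -> utility v o <= utility v (sel v).

Definition expensive (c : R) (M : set opt) : Prop :=
  forall o, M o -> o <> null_opt -> c <= o.2.

Definition Rev (D : probability (k.-tuple R) R) (sel : k.-tuple R -> opt)
  : \bar R := (\int[D]_v ((sel v).2)%:E)%E.

End Defs.

From HB Require Import structures.
From mathcomp Require Import all_boot all_order all_algebra.
From mathcomp Require Import all_classical all_reals all_analysis.
From mathcomp Require Import ring lra.
Set Implicit Arguments.
Unset Strict Implicit.
Unset Printing Implicit Defensive.
Import Order.TTheory GRing.Theory Num.Theory.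
Import numFieldNormedType.Exports.
Local Open Scope ring_scope.
Local Open Scope classical_set_scope.

(* Keep the options of M priced at least c and add an option (q, c) for every
   allocation q in the set Q of allocations that no type w >= 0 values above
   its M-utility plus c.  No type gains utility from the change, so a type
   paying at least c in M keeps its option, and every other type now pays 0
   or c, losing less than c.  Such a type weakly prefers its best new option
   (q, c), q in Q, to every expensive option o of M: mixing o with its
   M-choice so that the price becomes c yields an option (q', c) with q' in Q
   (utility is affine in the option), which it values at least as much as o.
   Q is a nonempty compact box cut by half-spaces, so v.q attains its maximum
   on Q, and this maximum is 1-Lipschitz in v for the l1 norm, which makes
   the new price measurable. *)

Section DotProduct.
Variables (R : realType) (k : nat).

Definition dotp (w q : k.-tuple R) : R := \sum_(i < k) tnth w i * tnth q i.

Lemma utilityE (v : k.-tuple R) (o : opt R k) : utility v o = dotp v o.1 - o.2.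
Proof. by []. Qed.

Lemma dotp0 (w : k.-tuple R) : dotp w [tuple 0 | _ < k] = 0.
Proof. by rewrite /dotp big1 // => i _; rewrite tnth_mktuple mulr0. Qed.

Lemma dotp_sub_le_l1 (v w q : k.-tuple R) : (forall i, 0 <= tnth q i <= 1) ->
  dotp v q - dotp w q <= \sum_(i < k) `|tnth v i - tnth w i|.
Proof.
move=> q01; rewrite /dotp -sumrB; apply: ler_sum => i _.
have /andP[q0 q1] := q01 i.
have := ler_norm (tnth v i - tnth w i).
have := ler_norm (- (tnth v i - tnth w i)); rewrite normrN; nra.
Qed.

Definition mix_opt (t : R) (o o' : opt R k) : opt R k :=
  ([tuple t * tnth o.1 i + (1 - t) * tnth o'.1 i | i < k], t * o.2 + (1 - t) * o'.2).

Lemma utility_mix (v : k.-tuple R) t o o' :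
  utility v (mix_opt t o o') = t * utility v o + (1 - t) * utility v o'.
Proof.
have dotp_mix : dotp v (mix_opt t o o').1 = t * dotp v o.1 + (1 - t) * dotp v o'.1.
  rewrite /dotp /= !mulr_sumr -big_split; apply: eq_bigr => i _.
  by rewrite tnth_mktuple /=; ring.
by rewrite !utilityE dotp_mix /=; ring.
Qed.

Lemma mix_opt_in_box t o o' : 0 <= t -> t <= 1 ->
  (forall i, 0 <= tnth o.1 i <= 1) -> (forall i, 0 <= tnth o'.1 i <= 1) ->
  forall i, 0 <= tnth (mix_opt t o o').1 i <= 1.
Proof.
move=> t0 t1 o01 o'01 i; rewrite tnth_mktuple.
have /andP[a0 a1] := o01 i; have /andP[b0 b1] := o'01 i.
apply/andP; split; nra.
Qed.

End DotProduct.

Section BoxArgmax.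
Variables (R : realType) (k : nat).

Definition constrained_box {J : Type} (a : J -> k.-tuple R) (b : J -> R) : set (k.-tuple R) :=
  [set q | (forall i, 0 <= tnth q i <= 1) /\ forall j, dotp (a j) q <= b j].

Let tuple_of_row (x : 'rV[R]_k) : k.-tuple R := [tuple x ord0 i | i < k].

Let tnth_tuple_of_row x i : tnth (tuple_of_row x) i = x ord0 i.
Proof. exact: tnth_mktuple. Qed.

Let continuous_linear_row (a : 'I_k -> R) :
  continuous (fun x : 'rV[R]_k => \sum_(i < k) a i * x ord0 i).
Proof.
apply: continuous_big => [|i _]; first exact: add_continuous.
by move=> x; apply: continuousM; [exact: cst_continuous | exact: coord_continuous].
Qed.

Let continuous_dotp_row (w : k.-tuple R) :
  continuous (fun x => dotp w (tuple_of_row x)).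
Proof.
have -> : (fun x => dotp w (tuple_of_row x)) =
    (fun x : 'rV[R]_k => \sum_(i < k) tnth w i * x ord0 i).
  by apply: funext => x; apply: eq_bigr => i _; rewrite tnth_tuple_of_row.
exact: continuous_linear_row.
Qed.

Let compact_constrained_box J a b :
  compact (tuple_of_row @^-1` @constrained_box J a b).
Proof.
pose box := [set x : 'rV[R]_k | forall i, `[(0 : R), 1] (x ord0 i)].
have -> : tuple_of_row @^-1` constrained_box a b = box `&`
    \bigcap_j ((fun x => dotp (a j) (tuple_of_row x)) @^-1` [set y | y <= b j]).
  apply/seteqP; split=> x /= [x01 xb]; split=> [i|j].
  - by have := x01 i; rewrite tnth_tuple_of_row /= in_itv.
  - by move=> _; exact: xb.
  - by have := x01 i; rewrite tnth_tuple_of_row /= in_itv.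
  - exact: xb.
apply: (subclosed_compact _ (@rV_compact _ _ (fun=> `[(0 : R), 1]%classic) _)).
- apply: closedI.
    rewrite [box](_ : _ = \bigcap_i ((fun x : 'rV[R]_k => x ord0 i) @^-1` `[(0 : R), 1])).
      apply: closed_bigI => i _; apply: preimage_closed.
        by move=> x _; exact: coord_continuous.
      exact: interval_closed.
    by apply/seteqP; split=> x /= x01 i => [_|]; apply: x01.
  apply: closed_bigI => j _; apply: preimage_closed.
    by move=> x _; exact: continuous_dotp_row.
  exact: closed_le.
- by move=> _; exact: segment_compact.
- by move=> x [].
Qed.

Lemma constrained_box_argmax J a b (v : k.-tuple R) :
  @constrained_box J a b !=set0 ->
  exists2 q, constrained_box a b q &
    forall q', constrained_box a b q' -> dotp v q' <= dotp v q.
Proof.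
move=> [q0 Qq0].
pose row_of_tuple (q : k.-tuple R) : 'rV[R]_k := \row_i tnth q i.
have row_of_tupleK q : tuple_of_row (row_of_tuple q) = q.
  by apply: eq_from_tnth => i; rewrite tnth_tuple_of_row mxE.
have ne : tuple_of_row @^-1` constrained_box a b !=set0.
  by exists (row_of_tuple q0); rewrite /= row_of_tupleK.
have [x] := compact_EVT_max ne (@compact_constrained_box J a b)
  (continuous_subspaceT (@continuous_dotp_row v)).
rewrite inE => Qx xmax; exists (tuple_of_row x) => // q' Qq'.
by rewrite -(row_of_tupleK q'); apply: xmax; rewrite inE /= row_of_tupleK.
Qed.

End BoxArgmax.

Lemma measurable_fun_countable_factor {d d'} {T : measurableType d}
    {U : measurableType d'} {I : countType} (F : T -> I) (f : I -> U) :
  (forall i, measurable (F @^-1` [set i])) -> measurable_fun setT (f \o F).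
Proof.
move=> mF _ B _; rewrite setTI comp_preimage.
have -> : F @^-1` (f @^-1` B) = \bigcup_i F @^-1` ([set i] `&` f @^-1` B).
  apply/seteqP; split=> [x Bx|x [i _ /= [-> //]]].
  by exists (F x).
apply: countable_bigcupT_measurable => [|i]; first exact: countableP.
have [Bi|nBi] := pselect (B (f i)).
  by rewrite setIidl // => _ ->.
by rewrite (_ : _ `&` _ = set0) ?preimage_set0 //; apply/seteqP; split=> // _ [->].
Qed.

Section GridMeasurability.
Variables (R : realType) (k : nat).

Definition grid_index (a : R) (v : k.-tuple R) : k.-tuple int :=
  [tuple Num.floor (a * tnth v i) | i < k].

Definition grid_point (a : R) (t : k.-tuple int) : k.-tuple R :=
  [tuple (tnth t i)%:~R / a | i < k].

Lemma measurable_grid_index_fiber a t :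
  measurable (grid_index a @^-1` [set t]).
Proof.
have -> : grid_index a @^-1` [set t] = \bigcap_(i in [set: 'I_k])
    ((fun v : k.-tuple R => a * tnth v i) @^-1`
      [set` Interval (BLeft (tnth t i)%:~R) (BLeft (tnth t i + 1)%:~R)]).
  apply/seteqP; split=> v /=.
    by move=> <- i _; rewrite tnth_mktuple /= in_itv /=; exact: floor_itv.
  move=> vt; apply: eq_from_tnth => i; rewrite tnth_mktuple.
  by apply/eqP; rewrite floor_eq; have := vt i I; rewrite /= in_itv.
apply: fin_bigcap_measurable; first exact: finite_finset.
move=> i _; rewrite -[X in measurable X]setTI.
by apply: (measurableT_comp (measurable_realfun.mulrl_measurable _)
  (@measurable_tnth _ _ k i)).
Qed.

Lemma grid_point_index_err (n : nat) v i :
  `|tnth v i - tnth (grid_point n.+1%:R (grid_index n.+1%:R v)) i| <= n.+1%:R^-1.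
Proof.
rewrite !tnth_mktuple; set m : R := n.+1%:R; set x := tnth v i.
have /andP[lo hi] := floor_itv (m * x); rewrite intrD rmorph1 in hi.
have m0 : 0 < m by rewrite ltr0n.
have -> : x - (Num.floor (m * x))%:~R / m = (m * x - (Num.floor (m * x))%:~R) / m.
  by field; rewrite gt_eqF.
rewrite ger0_norm ?divr_ge0 ?subr_ge0 ?(ltW m0) //.
by rewrite ler_pdivrMr // mulVf ?gt_eqF //; lra.
Qed.

(* Tuples carry the product sigma-algebra rather than a Borel one, so g is
   approximated by its values on the grid (n+1)^-1 Z^k, which factor through
   the countable-valued map [grid_index]. *)
Lemma l1_lipschitz_measurable (g : k.-tuple R -> R) :
  (forall v w, g v - g w <= \sum_(i < k) `|tnth v i - tnth w i|) ->
  measurable_fun setT g.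
Proof.
move=> g_lip.
pose approx n v := g (grid_point n.+1%:R (grid_index n.+1%:R v)).
have approx_err n v : `|g v - approx n v| <= k%:R * n.+1%:R^-1.
  have l1_err w : \sum_(i < k) `|tnth v i - tnth w i| <= k%:R * n.+1%:R^-1 ->
      `|g v - g w| <= k%:R * n.+1%:R^-1.
    move=> vw; rewrite ler_norml; apply/andP; split.
      rewrite lerNl opprB; apply: le_trans (g_lip w v) _.
      by under eq_bigr do rewrite distrC.
    exact: le_trans (g_lip v w) vw.
  apply: l1_err.
  have -> : k%:R * n.+1%:R^-1 = \sum_(i < k) n.+1%:R^-1 :> R.
    by rewrite sumr_const card_ord mulr_natl.
  by apply: ler_sum => i _; exact: grid_point_index_err.
apply: (measurable_realfun.measurable_fun_cvg (h := approx)).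
  move=> n; apply: (measurable_fun_countable_factor (F := grid_index n.+1%:R)
    (fun t => g (grid_point n.+1%:R t))).
  exact: measurable_grid_index_fiber.
move=> v _; apply/cvgrPdist_le => e e0.
have ek0 : 0 < e / k.+1%:R by rewrite divr_gt0.
apply: filterS (near_infty_natSinv_lt (PosNum ek0)) => n /= small.
apply: le_trans (approx_err n v) _.
apply: le_trans (_ : k%:R * (e / k.+1%:R) <= _).
  by rewrite ler_wpM2l // ltW.
rewrite mulrA ler_pdivrMr // [k%:R * e]mulrC.
by apply: ler_wpM2l; [exact: ltW | rewrite ler_nat].
Qed.

End GridMeasurability.

Section ExpensiveMechanism.
Variables (R : realType) (k : nat) (c : R).
Variables (M : set (opt R k)) (sel : k.-tuple R -> opt R k).
Hypotheses (c_ge0 : 0 <= c) (hM : is_mechanism M) (hsel : is_choice M sel).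

Definition safe_alloc : set (k.-tuple R) :=
  constrained_box (fun w : {w | nonneg_vec w} => sval w)
    (fun w => utility (sval w) (sel (sval w)) + c).

Definition safe_argmax (v : k.-tuple R) : k.-tuple R :=
  xget [tuple 0 | _ < k]
    [set q | safe_alloc q /\ forall q', safe_alloc q' -> dotp v q' <= dotp v q].

Definition safe_value (v : k.-tuple R) : R := dotp v (safe_argmax v).

Definition expensive_mech : set (opt R k) :=
  [set o | o = null_opt R k \/ (M o /\ c <= o.2) \/
           exists2 q, safe_alloc q & o = (q, c)].

Definition expensive_sel (v : k.-tuple R) : opt R k :=
  if c <= (sel v).2 then sel v
  else if c <= safe_value v then (safe_argmax v, c) else null_opt R k.

Lemma choice_utility_ge v o : nonneg_vec v -> M o -> utility v o <= utility v (sel v).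
Proof. by move=> nv Mo; apply: (hsel nv).2. Qed.

Lemma choice_utility_ge0 v : nonneg_vec v -> 0 <= utility v (sel v).
Proof.
move=> nv; have := choice_utility_ge nv hM.1.
by rewrite utilityE dotp0 subr0.
Qed.

Lemma safe_alloc_le v q : nonneg_vec v -> safe_alloc q -> dotp v q <= utility v (sel v) + c.
Proof. by move=> nv [_ qle]; exact: qle (exist _ v nv). Qed.

Lemma safe_argmaxP v :
  safe_alloc (safe_argmax v) /\ forall q, safe_alloc q -> dotp v q <= safe_value v.
Proof.
apply: (@xgetPex _ [tuple 0 | _ < k]
  [set q | safe_alloc q /\ forall q', safe_alloc q' -> dotp v q' <= dotp v q]).
have [|q] := constrained_box_argmax v (_ : safe_alloc !=set0); last by exists q.
exists [tuple 0 | _ < k]; split=> [i|[w nw]]; first by rewrite tnth_mktuple lexx ler01.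
by rewrite dotp0 addr_ge0 ?choice_utility_ge0.
Qed.

Lemma safe_value_lipschitz v w :
  safe_value v - safe_value w <= \sum_(i < k) `|tnth v i - tnth w i|.
Proof.
have [[qv01 _] _] := safe_argmaxP v.
apply: le_trans (dotp_sub_le_l1 v w qv01).
by rewrite lerD2l lerN2; apply: (safe_argmaxP w).2; exact: (safe_argmaxP v).1.
Qed.

Lemma expensive_option_le_safe_value v o : nonneg_vec v -> (sel v).2 < c ->
  M o -> c <= o.2 -> utility v o <= safe_value v - c.
Proof.
move=> nv pc Mo co; have Msel := (hsel nv).1.
have gap : 0 < o.2 - (sel v).2 by rewrite subr_gt0 (lt_le_trans pc).
pose t := (c - (sel v).2) / (o.2 - (sel v).2).
have t0 : 0 <= t by apply: divr_ge0; [rewrite subr_ge0 ltW | exact: ltW].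
have t1 : t <= 1 by rewrite /t ler_pdivrMr // mul1r lerD2r.
pose o' := mix_opt t o (sel v).
have price' : o'.2 = c by rewrite /= /t; field; rewrite gt_eqF.
have utility'_le w : nonneg_vec w -> utility w o' <= utility w (sel w).
  move=> nw; rewrite utility_mix.
  have := choice_utility_ge nw Mo; have := choice_utility_ge nw Msel; nra.
have safe' : safe_alloc o'.1.
  split=> [|[w nw]]; first by apply: mix_opt_in_box => //; exact: hM.2.
  by have := utility'_le w nw; rewrite [utility w o']utilityE price'; lra.
have : utility v o <= utility v o'.
  rewrite utility_mix; have := choice_utility_ge nv Mo; nra.
have := (safe_argmaxP v).2 _ safe'; rewrite [utility v o']utilityE price'; lra.
Qed.

Lemma expensive_mech_is_mechanism : is_mechanism expensive_mech.
Proof.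
split; first by left.
move=> o [->|[[Mo _]|[q [q01 _] ->]]] i //.
- by rewrite tnth_mktuple lexx ler01.
- exact: hM.2.
Qed.

Lemma expensive_mech_expensive : expensive c expensive_mech.
Proof. by move=> o [->|[[_ co]|[q _ ->]]]. Qed.

Lemma expensive_sel_choice : is_choice expensive_mech expensive_sel.
Proof.
move=> v nv; have [Msel selmax] := hsel nv.
have [safe_max max_safe] := safe_argmaxP v.
have null_u : utility v (null_opt R k) = 0 by rewrite utilityE dotp0 subr0.
rewrite /expensive_sel; case: (lerP c (sel v).2) => [cp|pc].
  split; first by right; left.
  move=> o [->|[[Mo _]|[q Qq ->]]]; [exact: selmax hM.1 | exact: selmax |].
  by have := safe_alloc_le nv Qq; rewrite !utilityE /=; lra.
have option_le o : expensive_mech o -> utility v o <= Num.max 0 (safe_value v - c).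
  move=> [->|[[Mo co]|[q Qq ->]]]; rewrite ?null_u ?le_max ?lexx //.
    by rewrite (expensive_option_le_safe_value nv pc Mo co) orbT.
  by rewrite utilityE /= lerD2r max_safe ?orbT.
case: (lerP c (safe_value v)) => [cg|gc].
  split; first by right; right; exists (safe_argmax v).
  by move=> o /option_le; rewrite utilityE /= max_r // subr_ge0.
split; first by left.
by move=> o /option_le; rewrite null_u max_l // subr_le0 ltW.
Qed.

Lemma expensive_sel_price_ge v : (sel v).2 - c <= (expensive_sel v).2.
Proof.
have c0 := c_ge0; rewrite /expensive_sel.
case: (lerP c (sel v).2) => pc /=; first lra.
by case: ifP => _ /=; lra.
Qed.

Lemma expensive_sel_price_norm v : `|(expensive_sel v).2| <= `|(sel v).2| + c.
Proof.
rewrite /expensive_sel; case: ifP => _; first by rewrite lerDl.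
case: ifP => _ /=; first by rewrite ger0_norm // lerDr.
by rewrite normr0 addr_ge0.
Qed.

Lemma measurable_expensive_sel_price :
  measurable_fun setT (fun v => (sel v).2) ->
  measurable_fun setT (fun v => (expensive_sel v).2).
Proof.
move=> mp.
have mg : measurable_fun setT safe_value.
  by apply: l1_lipschitz_measurable => v w; exact: safe_value_lipschitz.
rewrite (_ : (fun v => _) = fun v =>
    if c <= (sel v).2 then (sel v).2 else if c <= safe_value v then c else 0).
  apply: measurable_fun_ifT => //; first exact: measurable_realfun.measurable_fun_ler.
  apply: measurable_fun_ifT => //; exact: measurable_realfun.measurable_fun_ler.
by apply: funext => v; rewrite /expensive_sel; case: ifP => //; case: ifP.
Qed.

End ExpensiveMechanism.

Lemma integral_ge_sub_cst d (T : measurableType d) (R : realType)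
    (P : probability T R) (c : R) (f h : T -> R) :
  P.-integrable setT (EFin \o f) -> measurable_fun setT h ->
  (forall x, f x - c <= h x) -> (forall x, `|h x| <= `|f x| + c) ->
  (\int[P]_x (f x)%:E - c%:E <= \int[P]_x (h x)%:E)%E.
Proof.
move=> intf mh fh hf.
have intc : P.-integrable setT (EFin \o cst c) by exact: finite_measure_integrable_cst.
have inth : P.-integrable setT (EFin \o h).
  apply: (le_integrable measurableT _ _ (integrableD measurableT (integrable_abse intf) intc)).
    exact/measurable_realfun.measurable_EFinP.
  move=> x _ /=; rewrite lee_fin [X in _ <= X]ger0_norm //.
  exact: le_trans (normr_ge0 _) (hf x).
have -> : c%:E = (\int[P]_x (cst c x)%:E)%E.
  rewrite (_ : (fun x => _) = cst c%:E) // integral_cst // -[LHS]mule1.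
  by congr (_ * _)%E; apply/esym; exact: probability_setT.
rewrite -integralB_EFin //; apply: le_integral => //; first exact: integrableB.
by move=> x _; rewrite lee_fin; exact: fh.
Qed.

Theorem claim4p2 (R : realType) (k : nat) (c : R) (hc : 0 <= c)
  (D : probability (k.-tuple R) R)
  (hD : D [set v | nonneg_vec v] = 1%E)
  (M : set (opt R k)) (sel : k.-tuple R -> opt R k)
  (hM : is_mechanism M) (hsel : is_choice M sel)
  (hint : D.-integrable setT (fun v => ((sel v).2)%:E)) :
  exists (M' : set (opt R k)) (sel' : k.-tuple R -> opt R k),
    [/\ is_mechanism M', expensive c M', is_choice M' sel',
        measurable_fun setT (fun v => (sel' v).2) &
        (Rev D sel - c%:E <= Rev D sel')%E].
Proof.
have mp : measurable_fun setT (fun v => (sel v).2).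
  by apply/measurable_realfun.measurable_EFinP; exact: measurable_int hint.
have mp' := measurable_expensive_sel_price hc hM hsel mp.
exists (expensive_mech c M sel), (expensive_sel c sel); split => //.
- exact: expensive_mech_is_mechanism.
- exact: expensive_mech_expensive.
- exact: expensive_sel_choice.
- apply: integral_ge_sub_cst => // v.
  + exact: expensive_sel_price_ge.
  + exact: expensive_sel_price_norm.
Qed.
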